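(* Let $m\ge2$, $n\ge1$, let $f_i:\mathbb{R}^n\to\mathbb{R}$ be smooth, $F(\boldsymbol\theta)=\sum_{i=1}^m f_i(\boldsymbol\theta_i)$ for $\boldsymbol\theta=[\boldsymbol\theta_1^\top,\dots,\boldsymbol\theta_m^\top]^\top\in\mathbb{R}^{mn}$, and $\mathbf{r}\in\mathbb{R}^n$. Let $\boldsymbol\theta^0\in\mathbb{R}^{mn}$ satisfy $(\mathbf{1}_m^\top\otimes\mathbf{I}_n)\boldsymbol\theta^0=\mathbf{r}$ and let $\alpha>0$. Define the auxiliary function $\Psi_{\boldsymbol\theta^0}(\mathbf{x})=F(\boldsymbol\theta^0+\sqrt{\hat{\mathbf{L}}}\mathbf{x})$ for $\mathbf{x}\in\mathbb{R}^{mn}$. Then the sequence $\{\boldsymbol\theta^k\}$ generated by $\boldsymbol\theta^{k+1}=\boldsymbol\theta^k-\alpha\hat{\mathbf{L}}\nabla F(\boldsymbol\theta^k)$ from $\boldsymbol\theta^0$ coincides with the sequence generated by $$\mathbf{x}^{k+1}=\mathbf{x}^k-\alpha\nabla\Psi_{\boldsymbol\theta^0}(\mathbf{x}^k),\qquad \boldsymbol\theta^{k+1}=\boldsymbol\theta^0+\sqrt{\hat{\mathbf{L}}}\mathbf{x}^{k+1},$$ started from $\mathbf{x}^0=\mathbf{0}$ and the same $\boldsymbol\theta^0$, with the same step-size $\alpha$.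
   Context: $\mathbf{L}$ is the Laplacian matrix of an undirected graph on $\{1,\dots,m\}$ (symmetric positive semidefinite); $\sqrt{\mathbf{L}}$ is its unique symmetric positive semidefinite square root; $\hat{\mathbf{L}}=\mathbf{L}\otimes\mathbf{I}_n$ and $\sqrt{\hat{\mathbf{L}}}=\sqrt{\mathbf{L}}\otimes\mathbf{I}_n$. $\nabla F(\boldsymbol\theta)$ is the stacked vector of $\nabla f_i(\boldsymbol\theta_i)$. *)

From HB Require Import structures.
From mathcomp Require Import all_boot all_order all_algebra.
From mathcomp Require Import all_classical all_reals all_analysis.
Set Implicit Arguments. Unset Strict Implicit. Unset Printing Implicit Defensive.
Import Order.TTheory GRing.Theory Num.Theory.
Import numFieldNormedType.Exports.
Local Open Scope ring_scope.

(* Index bookkeeping for R^{mn} = stacked blocks: the k-th coordinate of a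
   stacked vector in R^{mn} corresponds to the pair (i, j) with i : 'I_m the
   block and j : 'I_n the coordinate inside the block (row-major, i.e. the
   standard stacking [theta_1^T, ..., theta_m^T]^T, as in mxvec). *)
Definition idx_pair (m n : nat) (k : 'I_(m * n)) : 'I_m * 'I_n :=
  enum_val (cast_ord (esym (mxvec_cast m n)) k).

Definition kronmx (R : ringType) (m1 n1 m2 n2 : nat)
  (A : 'M[R]_(m1, n1)) (B : 'M[R]_(m2, n2)) : 'M[R]_(m1 * m2, n1 * n2) :=
  \matrix_(k, l) (A (idx_pair k).1 (idx_pair l).1 * B (idx_pair k).2 (idx_pair l).2).

Definition blk (R : ringType) (m n : nat) (theta : 'cV[R]_(m * n)) (i : 'I_m)
  : 'cV[R]_n := \col_j theta (mxvec_index i j) 0.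

Definition laplacian (R : ringType) (m : nat) (e : rel 'I_m) : 'M[R]_m :=
  \matrix_(i, j) (if i == j then (#|[set k | e i k]|)%:R
                  else if e i j then -1 else 0).

Definition psd_mx (R : numDomainType) (m : nat) (S : 'M[R]_m) : Prop :=
  forall x : 'cV[R]_m, 0 <= (x^T *m S *m x) 0 0.

Definition is_psd_sqrt (R : numDomainType) (m : nat) (L S : 'M[R]_m) : Prop :=
  [/\ S^T = S, psd_mx S & S *m S = L].

Definition grad (R : realType) (N : nat) (g : 'cV[R]_N -> R) (x : 'cV[R]_N)
  : 'cV[R]_N := \col_k ('D_(delta_mx k 0) g x).

Definition iterD (R : realType) (V : normedModType R) (vs : seq V) (g : V -> R)
  : V -> R := foldr (fun v h => 'D_v h) g vs.

Definition smooth (R : realType) (V : normedModType R) (g : V -> R) : Prop :=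
  forall (vs : seq V) (x : V), differentiable (iterD vs g) x.

Definition Fsum (R : realType) (m n : nat) (f : 'I_m -> 'cV[R]_n -> R)
  (theta : 'cV[R]_(m * n)) : R := \sum_i f i (blk theta i).

Definition gradF (R : realType) (m n : nat) (f : 'I_m -> 'cV[R]_n -> R)
  (theta : 'cV[R]_(m * n)) : 'cV[R]_(m * n) :=
  \col_k grad (f (idx_pair k).1) (blk theta (idx_pair k).1) (idx_pair k).2 0.

From HB Require Import structures.
From mathcomp Require Import all_boot all_order all_algebra.
From mathcomp Require Import all_classical all_reals all_analysis.
Import Order.TTheory GRing.Theory Num.Theory.
Import numFieldNormedType.Exports.
Local Open Scope ring_scope.

(* Since sqrt(L^) is symmetric, the chain rule gives
   grad Psi(x) = sqrt(L^) gradF(theta0 + sqrt(L^) x).  Hence, if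
   theta^k = theta0 + sqrt(L^) x^k, one gradient step on Psi moves
   theta0 + sqrt(L^) x by -alpha sqrt(L^) sqrt(L^) gradF(theta^k)
   = -alpha L^ gradF(theta^k), where sqrt(L^)^2 = L^ by the mixed-product
   rule for Kronecker products; induction on k concludes. *)

Lemma idx_pair_mxvec_index m n (i : 'I_m) (j : 'I_n) :
  idx_pair (mxvec_index i j) = (i, j).
Proof. by rewrite /idx_pair /mxvec_index cast_ordK enum_rankK. Qed.

Lemma sum_mxvec_index (V : nmodType) m n (G : 'I_(m * n) -> V) :
  \sum_k G k = \sum_i \sum_j G (mxvec_index i j).
Proof.
rewrite pair_bigA /= (reindex (uncurry (@mxvec_index m n))) /=.
  by apply: eq_bigr => -[i j].
case: (curry_mxvec_bij m n) => g gK Kg.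
by exists g => k _; [exact: gK | exact: Kg].
Qed.

Lemma trmx_kronmx (R : nzRingType) m1 n1 m2 n2
  (A : 'M[R]_(m1, n1)) (B : 'M[R]_(m2, n2)) :
  (kronmx A B)^T = kronmx A^T B^T.
Proof. by apply/matrixP => k l; rewrite !mxE. Qed.

Lemma mul_kronmx (R : comNzRingType) m1 n1 p1 m2 n2 p2
  (A : 'M[R]_(m1, n1)) (B : 'M[R]_(m2, n2))
  (C : 'M[R]_(n1, p1)) (D : 'M[R]_(n2, p2)) :
  kronmx A B *m kronmx C D = kronmx (A *m C) (B *m D).
Proof.
apply/matrixP => k l; case/mxvec_indexP: k => i j; case/mxvec_indexP: l => i' j'.
rewrite !mxE !idx_pair_mxvec_index /= sum_mxvec_index big_distrlr /=.
apply: eq_bigr => t _; apply: eq_bigr => s _.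
by rewrite !mxE !idx_pair_mxvec_index /= mulrACA.
Qed.

Lemma blk_linearP (R : nzRingType) m n (a : R) (u v : 'cV[R]_(m * n)) i :
  blk (a *: u + v) i = a *: blk u i + blk v i.
Proof. by apply/matrixP => j k; rewrite !mxE. Qed.

Section DeriveCompAffine.
Context {R : realType} {V W : normedModType R}.
Variables (g : W -> R) (A : V -> W) (x v : V) (Av : W).
Hypothesis A_affine : forall h : R, A (h *: v + x) = h *: Av + A x.

Let quotient_comp :
  (fun h : R => h^-1 *: (((fun y => g (A y)) \o shift x) (h *: v) - g (A x))) =
  (fun h : R => h^-1 *: ((g \o shift (A x)) (h *: Av) - g (A x))).
Proof. by apply/funext => h /=; rewrite A_affine. Qed.

Lemma derive_comp_affine : 'D_v (fun y => g (A y)) x = 'D_Av g (A x).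
Proof. by rewrite /derive quotient_comp. Qed.

Lemma derivable_comp_affine : derivable g (A x) Av -> derivable (fun y => g (A y)) x v.
Proof. by rewrite /derivable quotient_comp. Qed.

End DeriveCompAffine.

Arguments derive_comp_affine {R V W} g A {x v Av}.
Arguments derivable_comp_affine {R V W} g A {x v Av}.

Lemma derive_gradE (R : realType) N (g : 'cV[R]_N -> R) a u :
  differentiable g a -> 'D_u g a = \sum_j u j 0 * grad g a j 0.
Proof.
move=> dg; rewrite deriveE // {1}[u](matrix_sum_delta u) linear_sum /=.
by apply: eq_bigr => j _; rewrite big_ord1 linearZ /= mxE -deriveE.
Qed.

Lemma derive_Fsum (R : realType) m n (f : 'I_m -> 'cV[R]_n -> R)
  (df : forall i a, differentiable (f i) a) theta w :
  'D_w (Fsum f) theta = \sum_l w l 0 * gradF f theta l 0.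
Proof.
have blk_affine i (h : R) : blk (h *: w + theta) i = h *: blk w i + blk theta i.
  exact: blk_linearP.
have -> : Fsum f = \sum_i (fun t => f i (blk t i)) by rewrite fct_sumE.
rewrite derive_sum; last first.
  by move=> i; apply: (derivable_comp_affine _ _ (blk_affine i)); exact: diff_derivable.
rewrite sum_mxvec_index; apply: eq_bigr => i _.
rewrite (derive_comp_affine _ (fun t => blk t i) (blk_affine i)) derive_gradE //.
by apply: eq_bigr => j _; rewrite !mxE idx_pair_mxvec_index.
Qed.

Lemma grad_Fsum_affine (R : realType) m n (f : 'I_m -> 'cV[R]_n -> R)
  (df : forall i a, differentiable (f i) a) (K : 'M[R]_(m * n)) theta0 x :
  grad (fun y => Fsum f (theta0 + K *m y)) x = K^T *m gradF f (theta0 + K *m x).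
Proof.
apply/matrixP => k z; rewrite (ord1 z) !mxE.
have affine (h : R) : theta0 + K *m (h *: delta_mx k 0 + x) =
    h *: (K *m delta_mx k 0) + (theta0 + K *m x).
  by rewrite mulmxDr -scalemxAr addrCA.
rewrite (derive_comp_affine (Fsum f) (fun y => theta0 + K *m y) affine) derive_Fsum //.
apply: eq_bigr => l _; rewrite !mxE; congr (_ * _).
rewrite (bigD1 k) //= big1 ?addr0; first by rewrite mxE !eqxx mulr1.
by move=> t /negbTE tk; rewrite mxE tk mulr0.
Qed.

Lemma descent_affine_reparam {R : comNzRingType} {N}
  (K : 'M[R]_N) (G : 'cV[R]_N -> 'cV[R]_N) {alpha : R}
  {theta x : nat -> 'cV[R]_N} {theta0 : 'cV[R]_N} :
  theta 0%N = theta0 -> x 0%N = 0 ->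
  (forall k, theta k.+1 = theta k - alpha *: (K *m K *m G (theta k))) ->
  (forall k, x k.+1 = x k - alpha *: (K *m G (theta0 + K *m x k))) ->
  forall k, theta k = theta0 + K *m x k.
Proof.
move=> theta_0 x_0 theta_S x_S; elim=> [|k IH].
  by rewrite theta_0 x_0 mulmx0 addr0.
by rewrite theta_S x_S -IH mulmxBr -scalemxAr -mulmxA IH addrA.
Qed.

Theorem proposition1 (R : realType) (m n : nat) (hm : (2 <= m)%N) (hn : (0 < n)%N)
  (e : rel 'I_m) (e_sym : symmetric e) (e_irr : irreflexive e)
  (S : 'M[R]_m) (hS : is_psd_sqrt (laplacian R e) S)
  (f : 'I_m -> 'cV[R]_n -> R) (hf : forall i, smooth (f i))
  (r : 'cV[R]_n) (theta0 : 'cV[R]_(m * n))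
  (h0 : castmx (mul1n n, erefl (m * n)%N)
          (kronmx (const_mx 1 : 'rV[R]_m) (1%:M : 'M[R]_n)) *m theta0 = r)
  (alpha : R) (halpha : 0 < alpha)
  (theta : nat -> 'cV[R]_(m * n))
  (htheta0 : theta 0%N = theta0)
  (htheta : forall k, theta k.+1 =
     theta k - alpha *: (kronmx (laplacian R e) (1%:M : 'M[R]_n) *m gradF f (theta k)))
  (x : nat -> 'cV[R]_(m * n)) (theta' : nat -> 'cV[R]_(m * n))
  (hx0 : x 0%N = 0) (htheta'0 : theta' 0%N = theta0)
  (hx : forall k, x k.+1 =
     x k - alpha *: grad (fun y => Fsum f (theta0 + kronmx S (1%:M : 'M[R]_n) *m y)) (x k))
  (htheta' : forall k, theta' k.+1 = theta0 + kronmx S (1%:M : 'M[R]_n) *m x k.+1) :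
  forall k, theta k = theta' k.
Proof.
(* Only the symmetry of S, S *m S = L and differentiability of the f i matter. *)
have df i a : differentiable (f i) a by exact: (hf i [::] a).
case: hS => ST _ SS.
set K := kronmx S (1%:M : 'M[R]_n).
have KT : K^T = K by rewrite /K trmx_kronmx ST trmx1.
have KK : kronmx (laplacian R e) (1%:M : 'M[R]_n) = K *m K.
  by rewrite /K mul_kronmx SS mulmx1.
have x_S k : x k.+1 = x k - alpha *: (K *m gradF f (theta0 + K *m x k)).
  by rewrite hx grad_Fsum_affine // KT.
have theta_S k : theta k.+1 = theta k - alpha *: (K *m K *m gradF f (theta k)).
  by rewrite htheta KK.
have reparam := descent_affine_reparam K (gradF f) htheta0 hx0 theta_S x_S.
by case=> [|k]; rewrite reparam ?hx0 ?htheta'0 ?mulmx0 ?addr0 // htheta'.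
Qed.
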